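(* Let $R$ be a lattice diagram of a knot or link. (1) Suppose that two problem crossings of $R$ are adjacent. Then either the two problem crossings have the same crossing type and neither is a bad neighbor of the other, or they have opposite crossing types and each is a bad neighbor of the other. (2) Suppose that four crossings of $R$ are the vertices of a unit square of the $\mathbb{Z}^2$ lattice. If at least two of these four crossings are problem crossings whose two adjacent crossings among the four are among its bad neighbors, then all four crossings are problem crossings and the four crossings form a Celtic configuration. (3) If $R$ has a problem crossing with more than two bad neighbors that are problem crossings, then $R$ has a Celtic configuration.
   Context: A lattice diagram of a knot or link is a knot or link diagram (with over/under information at finitely many transverse double points, the crossings) contained in the $\mathbb{Z}^2$ lattice (vertices the integer points, edges the unit segments parallel to the axes) with all crossings at lattice vertices. At a crossing $c$, the $x$-strand (resp. $y$-strand) is the union of the two horizontal (resp. vertical) lattice edges of $R$ with endpoint $c$; $c$ is an $x$-crossing (resp. $y$-crossing) if the over-strand is the $x$-strand (resp. $y$-strand); this is its crossing type. The crossing graph of $R$ is the subgraph of the $\mathbb{Z}^2$ lattice with a vertex at each crossing of $R$ and an edge between any two crossings at lattice distance $1$; two crossings are adjacent if they are joined by an edge of this graph. Two neighbors $a,b$ of a vertex $v$ in this graph are nearby neighbors of $v$ if the edges $va$ and $vb$ are perpendicular, and opposing neighbors if they are parallel. A crossing $c$ is a problem crossing if it has a pair of nearby neighbors in the crossing graph that both have crossing type opposite to that of $c$; any crossing belonging to such a pair is called a bad neighbor of $c$ (a problem crossing may have more than two bad neighbors). A Celtic configuration is a set of four crossings at the four vertices of a unit square of the $\mathbb{Z}^2$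 lattice such that any two of them joined by a side of the square have opposite crossing types. *)

From Stdlib Require Import ZArith Arith Lia.
Open Scope Z_scope.

Definition pt : Type := (Z * Z)%type.

(* A lattice diagram: a finite nonempty set of unit lattice edges in which
   every lattice vertex has degree 0, 2 or 4 (degree-4 vertices are the
   crossings, where the horizontal and vertical strands cross transversally),
   together with over/under information at the crossings.
   hE x y : the horizontal edge from (x,y) to (x+1,y) belongs to the diagram.
   vE x y : the vertical edge from (x,y) to (x,y+1) belongs to the diagram.
   xover x y = true : at the crossing (x,y) the x-strand is the over-strand. *)
Definition b2z (b : bool) : Z := if b then 1 else 0.

Record lattice_diagram := {
  hE : Z -> Z -> bool;
  vE : Z -> Z -> bool;
  xover : Z -> Z -> bool;
  bound : Z;
  hE_fin : forall x y, hE x y = true -> Z.abs x <= bound /\ Z.abs y <= bound;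
  vE_fin : forall x y, vE x y = true -> Z.abs x <= bound /\ Z.abs y <= bound;
  deg_ok : forall x y,
    let d := b2z (hE x y) + b2z (hE (x - 1) y) + b2z (vE x y) + b2z (vE x (y - 1)) in
    d = 0 \/ d = 2 \/ d = 4;
  nonempty : exists x y, hE x y = true \/ vE x y = true
}.

Definition deg (R : lattice_diagram) (p : pt) : Z :=
  b2z (hE R (fst p) (snd p)) + b2z (hE R (fst p - 1) (snd p))
  + b2z (vE R (fst p) (snd p)) + b2z (vE R (fst p) (snd p - 1)).

Definition is_crossing (R : lattice_diagram) (p : pt) : Prop := deg R p = 4.

(* crossing type: true = x-crossing, false = y-crossing *)
Definition ctype (R : lattice_diagram) (p : pt) : bool := xover R (fst p) (snd p).

Definition opp_type (R : lattice_diagram) (p q : pt) : Prop := ctype R p <> ctype R q.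

Definition adjacent (R : lattice_diagram) (p q : pt) : Prop :=
  is_crossing R p /\ is_crossing R q /\
  Z.abs (fst p - fst q) + Z.abs (snd p - snd q) = 1.

Definition nearby (R : lattice_diagram) (v a b : pt) : Prop :=
  adjacent R v a /\ adjacent R v b /\
  (fst a - fst v) * (fst b - fst v) + (snd a - snd v) * (snd b - snd v) = 0.

Definition problem (R : lattice_diagram) (c : pt) : Prop :=
  is_crossing R c /\
  exists a b, nearby R c a b /\ opp_type R c a /\ opp_type R c b.

Definition bad_neighbor (R : lattice_diagram) (c a : pt) : Prop :=
  exists b, nearby R c a b /\ opp_type R c a /\ opp_type R c b.

Definition sq (p : pt) (i : nat) : pt :=
  match i with
  | 0%nat => p
  | 1%nat => (fst p + 1, snd p)
  | 2%nat => (fst p + 1, snd p + 1)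
  | _ => (fst p, snd p + 1)
  end.

Definition nxt (i : nat) : nat := Nat.modulo (i + 1) 4.
Definition prv (i : nat) : nat := Nat.modulo (i + 3) 4.

Definition celtic (R : lattice_diagram) (p : pt) : Prop :=
  (forall i, (i < 4)%nat -> is_crossing R (sq p i)) /\
  (forall i, (i < 4)%nat -> opp_type R (sq p i) (sq p (nxt i))).

Definition good_corner (R : lattice_diagram) (p : pt) (i : nat) : Prop :=
  problem R (sq p i) /\
  bad_neighbor R (sq p i) (sq p (nxt i)) /\
  bad_neighbor R (sq p i) (sq p (prv i)).

From Stdlib Require Import ZArith Lia Bool.
Open Scope Z_scope.

(* A problem crossing has two bad neighbours in perpendicular directions, and
   any lattice direction is perpendicular to one of two perpendicular ones; so
   a problem crossing has, perpendicular to any prescribed direction, a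
   neighbour of the opposite type.  In (2) the constraints at
   two corners already force the types to alternate around the square, and in
   an alternating square every corner is a problem crossing.  In (3) three
   distinct neighbours of c contain an opposite pair a, a' and a third one m
   perpendicular to them; the problem crossing m has a neighbour n of type
   opposite to m in the direction of a or a', and c, m, n together with a or
   a' span a unit square with alternating types. *)

Definition vsub (p q : pt) : pt := (fst p - fst q, snd p - snd q).
Definition vopp (d : pt) : pt := (- fst d, - snd d).
Definition unit_step (d : pt) : Prop := Z.abs (fst d) + Z.abs (snd d) = 1.
Definition orthogonal (d e : pt) : Prop := fst d * fst e + snd d * snd e = 0.
Definition parity (q : pt) : bool := Z.odd (fst q + snd q).

Lemma unit_step_cases d :
  unit_step d -> d = (1, 0) \/ d = (-1, 0) \/ d = (0, 1) \/ d = (0, -1).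
Proof.
  destruct d as [x y]; unfold unit_step; simpl; intro H.
  assert (E : (x = 1 /\ y = 0) \/ (x = -1 /\ y = 0) \/ (x = 0 /\ y = 1)
              \/ (x = 0 /\ y = -1)) by lia.
  destruct E as [[-> ->]|[[-> ->]|[[-> ->]|[-> ->]]]]; auto.
Qed.

Lemma orthogonal_sym {d e} : orthogonal d e -> orthogonal e d.
Proof. unfold orthogonal; nia. Qed.

Lemma orthogonal_cover u v w :
  unit_step u -> unit_step v -> unit_step w -> orthogonal u v ->
  orthogonal u w \/ orthogonal v w.
Proof.
  intros Hu Hv Hw Huv.
  apply unit_step_cases in Hu, Hv, Hw.
  destruct Hu as [->|[->|[->| ->]]]; destruct Hv as [->|[->|[->| ->]]];
    destruct Hw as [->|[->|[->| ->]]]; compute in Huv |- *; intuition discriminate.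
Qed.

Lemma orthogonal_unit_axis e f g :
  unit_step e -> unit_step f -> unit_step g ->
  orthogonal e f -> orthogonal g f -> g = e \/ g = vopp e.
Proof.
  intros He Hf Hg Hef Hgf.
  apply unit_step_cases in He, Hf, Hg.
  destruct He as [->|[->|[->| ->]]]; destruct Hf as [->|[->|[->| ->]]];
    destruct Hg as [->|[->|[->| ->]]]; compute in Hef, Hgf |- *;
    intuition discriminate.
Qed.

Lemma three_unit_steps_split {d1 d2 d3} :
  unit_step d1 -> unit_step d2 -> unit_step d3 ->
  d1 <> d2 -> d1 <> d3 -> d2 <> d3 ->
  (d2 = vopp d1 /\ orthogonal d1 d3) \/ (d3 = vopp d1 /\ orthogonal d1 d2)
  \/ (d3 = vopp d2 /\ orthogonal d2 d1).
Proof.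
  intros H1 H2 H3 N12 N13 N23.
  apply unit_step_cases in H1, H2, H3.
  destruct H1 as [->|[->|[->| ->]]]; destruct H2 as [->|[->|[->| ->]]];
    destruct H3 as [->|[->|[->| ->]]]; try congruence; compute;
    intuition discriminate.
Qed.

Lemma vsub_neq {a b} c : a <> b -> vsub a c <> vsub b c.
Proof.
  destruct a as [xa ya], b as [xb yb]; unfold vsub; simpl; intros N E.
  injection E as Ex Ey; apply N; f_equal; lia.
Qed.

Lemma parity_flip p q : unit_step (vsub p q) -> parity p = negb (parity q).
Proof.
  unfold unit_step, vsub, parity; simpl; intro H.
  assert (E : fst p + snd p = fst q + snd q + 1
              \/ fst p + snd p = fst q + snd q + -1) by lia.
  destruct E as [E|E]; rewrite E, Z.odd_add;
    destruct (Z.odd (fst q + snd q)); reflexivity.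
Qed.

Lemma adjacent_intro R v a :
  is_crossing R v -> is_crossing R a -> unit_step (vsub a v) -> adjacent R v a.
Proof.
  unfold unit_step, vsub; simpl; intros Cv Ca H.
  split; [exact Cv | split; [exact Ca | lia]].
Qed.

Lemma adjacent_unit_step {R v a} : adjacent R v a -> unit_step (vsub a v).
Proof. intros [_ [_ H]]; unfold unit_step, vsub; simpl; lia. Qed.

Lemma adjacent_sym {R p q} : adjacent R p q -> adjacent R q p.
Proof. intros [Cp [Cq H]]; split; [exact Cq | split; [exact Cp | lia]]. Qed.

Lemma bad_neighbor_adjacent_opp {R c a} :
  bad_neighbor R c a -> adjacent R c a /\ opp_type R c a.
Proof. intros [b [[Aca _] [Oca _]]]; split; assumption. Qed.

Lemma problem_opp_neighbor_orthogonal R c f :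
  problem R c -> unit_step f ->
  exists a, adjacent R c a /\ orthogonal (vsub a c) f /\ opp_type R c a.
Proof.
  intros [_ [u [v [[Au [Av Huv]] [Ou Ov]]]]] Hf.
  destruct (orthogonal_cover (vsub u c) (vsub v c) f
              (adjacent_unit_step Au) (adjacent_unit_step Av) Hf Huv) as [H|H].
  - exists u; auto.
  - exists v; auto.
Qed.

Lemma bad_neighbor_of_opp_type {R c a} :
  problem R c -> adjacent R c a -> opp_type R c a -> bad_neighbor R c a.
Proof.
  intros Pc Aca Oca.
  destruct (problem_opp_neighbor_orthogonal R c (vsub a c) Pc
              (adjacent_unit_step Aca)) as [b [Acb [Hba Ocb]]].
  exists b; exact (conj (conj Aca (conj Acb (orthogonal_sym Hba))) (conj Oca Ocb)).
Qed.

Lemma nxt_lt i : (i < 4)%nat -> (nxt i < 4)%nat.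
Proof. intros; unfold nxt; apply Nat.mod_upper_bound; lia. Qed.

Lemma prv_lt i : (i < 4)%nat -> (prv i < 4)%nat.
Proof. intros; unfold prv; apply Nat.mod_upper_bound; lia. Qed.

Lemma nxt_prv i : (i < 4)%nat -> nxt (prv i) = i.
Proof. intros; destruct i as [|[|[|[|i]]]]; try lia; reflexivity. Qed.

Lemma sq_sides p i : (i < 4)%nat ->
  unit_step (vsub (sq p (nxt i)) (sq p i)) /\
  unit_step (vsub (sq p (prv i)) (sq p i)) /\
  orthogonal (vsub (sq p (nxt i)) (sq p i)) (vsub (sq p (prv i)) (sq p i)).
Proof.
  intros Hi; destruct i as [|[|[|[|i]]]]; try lia;
    unfold unit_step, orthogonal, vsub; simpl; repeat split; nia.
Qed.

Lemma celtic_corner_problem {R p i} : celtic R p -> (i < 4)%nat -> problem R (sq p i).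
Proof.
  intros [Hc Ht] Hi.
  destruct (sq_sides p i Hi) as [Hn [Hp Ho]].
  split; [exact (Hc i Hi)|].
  exists (sq p (nxt i)), (sq p (prv i)).
  split; [split; [|split] | split].
  - exact (adjacent_intro R _ _ (Hc i Hi) (Hc _ (nxt_lt i Hi)) Hn).
  - exact (adjacent_intro R _ _ (Hc i Hi) (Hc _ (prv_lt i Hi)) Hp).
  - exact Ho.
  - exact (Ht i Hi).
  - intro E; apply (Ht (prv i) (prv_lt i Hi)).
    rewrite nxt_prv by exact Hi; symmetry; exact E.
Qed.

Lemma alternating_of_two_corners (T : nat -> bool) i j :
  (i < 4)%nat -> (j < 4)%nat -> i <> j ->
  T i <> T (nxt i) -> T i <> T (prv i) -> T j <> T (nxt j) -> T j <> T (prv j) ->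
  forall k, (k < 4)%nat -> T k <> T (nxt k).
Proof.
  intros Hi Hj Hij H1 H2 H3 H4 k Hk.
  destruct i as [|[|[|[|i]]]]; try lia; destruct j as [|[|[|[|j]]]]; try lia;
    destruct k as [|[|[|[|k]]]]; try lia; unfold nxt, prv in *; simpl in *;
    destruct (T 0%nat), (T 1%nat), (T 2%nat), (T 3%nat); congruence.
Qed.

Lemma celtic_of_checkerboard R p b :
  (forall i, (i < 4)%nat -> is_crossing R (sq p i)) ->
  (forall i, (i < 4)%nat -> ctype R (sq p i) = xorb b (parity (sq p i))) ->
  celtic R p.
Proof.
  intros Hc Ht; split; [exact Hc|].
  intros i Hi; unfold opp_type.
  rewrite (Ht i Hi), (Ht _ (nxt_lt i Hi)),
    (parity_flip _ _ (proj1 (sq_sides p i Hi))).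
  destruct b, (parity (sq p i)); discriminate.
Qed.

Lemma unit_square_corners c a m n :
  unit_step (vsub a c) -> unit_step (vsub m c) ->
  orthogonal (vsub a c) (vsub m c) -> vsub n m = vsub a c ->
  exists p, forall i, (i < 4)%nat ->
    sq p i = c \/ sq p i = a \/ sq p i = m \/ sq p i = n.
Proof.
  destruct c as [x y], a as [xa ya], m as [xm ym], n as [xn yn].
  unfold unit_step, orthogonal, vsub; simpl; intros Ha Hm Ham Hn.
  injection Hn as Hnx Hny.
  exists (Z.min x xn, Z.min y yn); intros i Hi.
  assert (Ea : (xa = x + 1 /\ ya = y) \/ (xa = x - 1 /\ ya = y)
               \/ (xa = x /\ ya = y + 1) \/ (xa = x /\ ya = y - 1)) by lia.
  assert (Em : (xm = x + 1 /\ ym = y) \/ (xm = x - 1 /\ ym = y)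
               \/ (xm = x /\ ym = y + 1) \/ (xm = x /\ ym = y - 1)) by lia.
  destruct Ea as [[-> ->]|[[-> ->]|[[-> ->]|[-> ->]]]];
    destruct Em as [[-> ->]|[[-> ->]|[[-> ->]|[-> ->]]]]; try lia;
    destruct i as [|[|[|[|i]]]]; try lia; unfold sq; simpl;
    solve [ left; f_equal; lia | right; left; f_equal; lia
          | right; right; left; f_equal; lia | right; right; right; f_equal; lia ].
Qed.

Lemma celtic_of_alternating_square R c a m n :
  adjacent R c a -> adjacent R c m -> adjacent R m n ->
  orthogonal (vsub a c) (vsub m c) -> vsub n m = vsub a c ->
  opp_type R c a -> opp_type R c m -> opp_type R m n ->
  exists p, celtic R p.
Proof.
  intros Aca Acm Amn Ham Hn Oca Ocm Omn.
  destruct (unit_square_corners c a m n (adjacent_unit_step Aca)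
              (adjacent_unit_step Acm) Ham Hn) as [p Hp].
  pose proof (parity_flip _ _ (adjacent_unit_step Aca)) as Pa.
  pose proof (parity_flip _ _ (adjacent_unit_step Acm)) as Pm.
  pose proof (parity_flip _ _ (adjacent_unit_step Amn)) as Pn.
  destruct Aca as [Cc [Ca _]], Amn as [Cm [Cn _]].
  exists p; apply (celtic_of_checkerboard R p (xorb (ctype R c) (parity c))).
  - intros i Hi; destruct (Hp i Hi) as [->|[->|[->| ->]]]; assumption.
  - intros i Hi; unfold opp_type in *.
    destruct (Hp i Hi) as [->|[->|[->| ->]]]; rewrite ?Pa, ?Pn, ?Pm;
      destruct (ctype R c), (ctype R a), (ctype R m), (ctype R n), (parity c);
      simpl; congruence.
Qed.

Lemma celtic_of_opposite_pair_and_problem {R c a a' m} :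
  adjacent R c a -> adjacent R c a' -> vsub a' c = vopp (vsub a c) ->
  opp_type R c a -> opp_type R c a' ->
  adjacent R c m -> orthogonal (vsub a c) (vsub m c) -> problem R m ->
  opp_type R c m -> exists p, celtic R p.
Proof.
  intros Aca Aca' Ha' Oca Oca' Acm Ham Pm Ocm.
  destruct (problem_opp_neighbor_orthogonal R m (vsub m c) Pm
              (adjacent_unit_step Acm)) as [n [Amn [Hnm Omn]]].
  destruct (orthogonal_unit_axis (vsub a c) (vsub m c) (vsub n m)
              (adjacent_unit_step Aca) (adjacent_unit_step Acm)
              (adjacent_unit_step Amn) Ham Hnm) as [E|E].
  - exact (celtic_of_alternating_square R c a m n Aca Acm Amn Ham E Oca Ocm Omn).
  - rewrite <- Ha' in E.
    rewrite E in Hnm.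
    exact (celtic_of_alternating_square R c a' m n Aca' Acm Amn Hnm E Oca' Ocm Omn).
Qed.

Theorem lemma3p6 (R : lattice_diagram) :
  (* (1) *)
  (forall a b : pt,
     problem R a -> problem R b -> adjacent R a b ->
     (ctype R a = ctype R b /\ ~ bad_neighbor R a b /\ ~ bad_neighbor R b a)
     \/ (opp_type R a b /\ bad_neighbor R a b /\ bad_neighbor R b a))
  /\
  (* (2) *)
  (forall p : pt,
     (forall i, (i < 4)%nat -> is_crossing R (sq p i)) ->
     (exists i j, (i < 4)%nat /\ (j < 4)%nat /\ i <> j /\
                  good_corner R p i /\ good_corner R p j) ->
     (forall i, (i < 4)%nat -> problem R (sq p i)) /\ celtic R p)
  /\
  (* (3) *)
  ((exists c a1 a2 a3 : pt,
      problem R c /\ a1 <> a2 /\ a1 <> a3 /\ a2 <> a3 /\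
      bad_neighbor R c a1 /\ problem R a1 /\
      bad_neighbor R c a2 /\ problem R a2 /\
      bad_neighbor R c a3 /\ problem R a3) ->
   exists p : pt, celtic R p).
Proof.
  split; [|split].
  - intros a b Pa Pb Aab.
    destruct (bool_dec (ctype R a) (ctype R b)) as [E|E].
    + left; split; [exact E | split; intros B];
        apply (proj2 (bad_neighbor_adjacent_opp B)); congruence.
    + right; split; [exact E | split].
      * exact (bad_neighbor_of_opp_type Pa Aab E).
      * apply (bad_neighbor_of_opp_type Pb (adjacent_sym Aab)); congruence.
  - intros p Hc [i [j [Hi [Hj [Hij [[_ [Bi Bi']] [_ [Bj Bj']]]]]]]].
    apply bad_neighbor_adjacent_opp in Bi as [_ Oi], Bi' as [_ Oi'],
      Bj as [_ Oj], Bj' as [_ Oj'].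
    assert (Hcel : celtic R p).
    { split; [exact Hc|].
      exact (alternating_of_two_corners (fun k => ctype R (sq p k)) i j
               Hi Hj Hij Oi Oi' Oj Oj'). }
    split; [intros k Hk; exact (celtic_corner_problem Hcel Hk) | exact Hcel].
  - intros [c [a1 [a2 [a3 [_ [N12 [N13 [N23 [B1 [P1 [B2 [P2 [B3 P3]]]]]]]]]]]]].
    apply bad_neighbor_adjacent_opp in B1 as [A1 O1], B2 as [A2 O2], B3 as [A3 O3].
    destruct (three_unit_steps_split
                (adjacent_unit_step A1) (adjacent_unit_step A2) (adjacent_unit_step A3)
                (vsub_neq c N12) (vsub_neq c N13) (vsub_neq c N23))
      as [[E O]|[[E O]|[E O]]].
    + exact (celtic_of_opposite_pair_and_problem A1 A2 E O1 O2 A3 O P3 O3).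
    + exact (celtic_of_opposite_pair_and_problem A1 A3 E O1 O3 A2 O P2 O2).
    + exact (celtic_of_opposite_pair_and_problem A2 A3 E O2 O3 A1 O P1 O1).
Qed.
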